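(* Let $\mathscr{F}$ be a family of languages closed under union, product, Kleene closure and rational transductions. Let $S$ be a semigroup, $\sigma : X^+ \to S$ a choice of generators for $S$, $S^0$ the semigroup $S$ with a new zero $0$ adjoined, $Y = X \cup \{z\}$ for a new letter $z$, and $\tau : Y^+ \to S^0$ the extension of $\sigma$ with $z\tau = 0$. Then $L_\sigma(S) \in \mathscr{F}$ if and only if $L_\tau(S^0) \in \mathscr{F}$.
   Context: For a semigroup $S$, $S^1$ denotes the monoid obtained by adjoining a new identity $1$ (even if $S$ already has one). A choice of generators for $S$ is a surjective morphism $\sigma : X^+ \to S$ from a free semigroup; it extends uniquely to $\sigma^1 : X^* \to S^1$. Let $\overline{X} = \{\overline{x} : x \in X\}$ be a set of formal inverses, $\hat{X} = X \cup \overline{X}$. The loop automaton of $S$ with respect to $\sigma$ is the directed labelled graph with vertex set $S^1$, having for each $a \in S^1$ and $x \in X$ an edge from $a$ to $a(x\sigma)$ labelled $x$ and an edge from $a(x\sigma)$ to $a$ labelled $\overline{x}$. The loop problem $L_\sigma(S) \subseteq \hat{X}^*$ is the set of words labelling paths from $1$ to $1$ in this graph (including the empty word). A rational transduction is a relation between free monoids realised by a finite-state transducer; the image of a language under it is the set of outputs paired with inputs from the language. *)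

From mathcomp Require Import all_boot.
Set Implicit Arguments. Unset Strict Implicit. Unset Printing Implicit Defensive.

Definition language (A : finType) := seq A -> Prop.

Definition lang_family := forall A : finType, language A -> Prop.

Definition lang_union (A : finType) (L1 L2 : language A) : language A :=
  fun w => L1 w \/ L2 w.
Definition lang_prod (A : finType) (L1 L2 : language A) : language A :=
  fun w => exists u v, w = u ++ v /\ L1 u /\ L2 v.
Definition lang_star (A : finType) (L : language A) : language A :=
  fun w => exists ws : seq (seq A), (forall u, u \in ws -> L u) /\ w = flatten ws.

Record transducer (A B : finType) := Transducer {
  tstate : finType;
  tinit : pred tstate;
  tfinal : pred tstate;
  ttrans : seq (tstate * seq A * seq B * tstate) }.

Inductive trun (A B : finType) (T : transducer A B)
  : tstate T -> seq A -> seq B -> tstate T -> Prop :=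
| trun_nil q : trun q [::] [::] q
| trun_cons q u v q' u' v' q'' :
    (q, u, v, q') \in ttrans T -> trun q' u' v' q'' ->
    trun q (u ++ u') (v ++ v') q''.

Definition transduce (A B : finType) (T : transducer A B) (L : language A)
  : language B :=
  fun v => exists u (q q' : tstate T),
    L u /\ q \in @tinit A B T /\ q' \in @tfinal A B T /\ @trun A B T q u v q'.

Definition closed_union (F : lang_family) :=
  forall (A : finType) (L1 L2 : language A), F A L1 -> F A L2 -> F A (lang_union L1 L2).
Definition closed_prod (F : lang_family) :=
  forall (A : finType) (L1 L2 : language A), F A L1 -> F A L2 -> F A (lang_prod L1 L2).
Definition closed_star (F : lang_family) :=
  forall (A : finType) (L : language A), F A L -> F A (lang_star L).
Definition closed_transduction (F : lang_family) :=
  forall (A B : finType) (T : transducer A B) (L : language A),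
    F A L -> F B (transduce T L).

Definition associative_op (T : Type) (op : T -> T -> T) :=
  forall a b c, op a (op b c) = op (op a b) c.

(* sigma^+ : X^+ -> S applied to the nonempty word x :: w. *)
Definition eval_word (T : Type) (op : T -> T -> T) (X : Type) (g : X -> T)
  (x : X) (w : seq X) : T :=
  foldl (fun acc y => op acc (g y)) (g x) w.

Definition generates (T : Type) (op : T -> T -> T) (X : Type) (g : X -> T) :=
  forall s : T, exists x w, eval_word op g x w = s.

(* S^1 represented as option T, None being the adjoined identity 1;
   right multiplication of a in S^1 by s in S. *)
Definition mul1 (T : Type) (op : T -> T -> T) (a : option T) (s : T) : option T :=
  match a with None => Some s | Some b => Some (op b s) end.

(* S^0 represented as option T, None being the adjoined zero 0. *)
Definition op0 (T : Type) (op : T -> T -> T) (a b : option T) : option T :=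
  match a, b with Some a, Some b => Some (op a b) | _, _ => None end.

(* tau : Y -> S^0 with Y = option X, None = z, z tau = 0. *)
Definition gen0 (T : Type) (X : Type) (g : X -> T) (y : option X) : option T :=
  match y with Some x => Some (g x) | None => None end.

(* Hat X = X + X: inl x is x, inr x is the formal inverse xbar.
   loop_reach a w b : w labels a path from a to b in the loop automaton
   (vertex set S^1, edge a -x-> a(x sigma), edge a(x sigma) -xbar-> a). *)
Fixpoint loop_reach (T : Type) (op : T -> T -> T) (X : Type) (g : X -> T)
  (a : option T) (w : seq (X + X)) (b : option T) {struct w} : Prop :=
  match w with
  | [::] => a = b
  | inl x :: w' => loop_reach op g (mul1 op a (g x)) w' b
  | inr x :: w' => exists c, mul1 op c (g x) = a /\ loop_reach op g c w' b
  end.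

Definition loop_problem (T : Type) (op : T -> T -> T) (X : finType) (g : X -> T)
  : language (X + X)%type :=
  fun w => loop_reach op g None w None.

(* The vertices of the loop automaton of S^0 are 0 and the vertices of the loop
   automaton of S (the elements of S^1).  A path avoiding 0 is the image of a path
   for S under the letter embedding hat_some, so L_sigma(S) is the inverse image
   of L_tau(S^0) under that morphism.  A path through 0 enters it only by z,
   leaves it only by zbar, and may read anything while at 0.  Since sigma
   generates S, every element of S^1 lies on a loop at 1, so the part before the
   first z ranges over the prefixes, and the part after the last zbar over the
   suffixes, of L_sigma(S):
     L_tau(S^0) = hat(L) + hat(Pref L) z Y^* . zbar hat(Suff L),  L = L_sigma(S),
   and each of the three languages on the right is a rational transduction of L. *)

From mathcomp Require Import all_boot.
From Stdlib Require Import FunctionalExtensionality PropExtensionality.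
Set Implicit Arguments. Unset Strict Implicit. Unset Printing Implicit Defensive.

Lemma language_ext (A : finType) (L1 L2 : language A) :
  (forall w, L1 w <-> L2 w) -> L1 = L2.
Proof.
by move=> eqL; apply: functional_extensionality => w; apply: propositional_extensionality.
Qed.

Section PhaseTransducer.

Variables A B : finType.
Implicit Types (P : seq (seq A * seq B)) (T : transducer A B) (L : language A).

Inductive rel_star P : seq A -> seq B -> Prop :=
| rel_star_nil : rel_star P [::] [::]
| rel_star_cons u v u' v' :
    (u, v) \in P -> rel_star P u' v' -> rel_star P (u ++ u') (v ++ v').

Lemma rel_star_cat P u v u' v' :
  rel_star P u v -> rel_star P u' v' -> rel_star P (u ++ u') (v ++ v').
Proof.
elim=> // {}u {}v u0 v0 Puv _ IH /IH; rewrite -!catA; exact: rel_star_cons.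
Qed.

Lemma trun_cat T q u v q1 u' v' q2 :
  trun q u v q1 -> trun q1 u' v' q2 -> @trun A B T q (u ++ u') (v ++ v') q2.
Proof.
elim=> // {}q u0 v0 q0 u1 v1 q3 H _ IH /IH; rewrite -!catA; exact: trun_cons H.
Qed.

Lemma trun1 T q u v q' : (q, u, v, q') \in ttrans T -> trun q u v q'.
Proof. by move=> H; rewrite -(cats0 u) -(cats0 v); apply: trun_cons H (trun_nil _). Qed.

Lemma rel_star_trun T P q u v :
  (forall u0 v0, (u0, v0) \in P -> (q, u0, v0, q) \in ttrans T) ->
  rel_star P u v -> trun q u v q.
Proof.
move=> loopP; elim=> [|u0 v0 u' v' P0 _ IH]; first exact: trun_nil.
exact: trun_cons (loopP _ _ P0) IH.
Qed.

Definition phaseT P1 (s : seq A * seq B) P2 : transducer A B :=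
  @Transducer A B bool (pred1 false) (pred1 true)
    ([seq (false, p.1, p.2, false) | p <- P1] ++ (false, s.1, s.2, true) ::
     [seq (true, p.1, p.2, true) | p <- P2]).

Lemma trun_phaseT P1 s P2 (q q' : bool) u v :
  @trun A B (phaseT P1 s P2) q u v q' ->
  match q, q' with
  | false, false => rel_star P1 u v
  | true, true => rel_star P2 u v
  | false, true => exists u1 v1 u2 v2, [/\ rel_star P1 u1 v1, rel_star P2 u2 v2,
                     u = u1 ++ s.1 ++ u2 & v = v1 ++ s.2 ++ v2]
  | true, false => False
  end :> Prop.
Proof.
elim=> [[]|{}q u0 v0 q0 u1 v1 q1]; try exact: rel_star_nil.
rewrite mem_cat in_cons => /or3P [/mapP [[a b] Pab [-> -> -> ->]] |
  /eqP [-> -> -> ->] | /mapP [[a b] Pab [-> -> -> ->]]] _; case: q1 => //=.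
- case=> u2 [v2 [u3 [v3 [H2 H3 -> ->]]]].
  by exists (a ++ u2), (b ++ v2), u3, v3; rewrite -!catA; split=> //; exact: rel_star_cons.
- exact: rel_star_cons.
- by move=> H; exists [::], [::], u1, v1; split=> //; exact: rel_star_nil.
- exact: rel_star_cons.
Qed.

Lemma transduce_phaseT P1 s P2 L v :
  transduce (phaseT P1 s P2) L v <->
  exists u1 v1 u2 v2, [/\ rel_star P1 u1 v1, rel_star P2 u2 v2,
    L (u1 ++ s.1 ++ u2) & v = v1 ++ s.2 ++ v2].
Proof.
split.
- case=> u [q [q' [Lu [/eqP-> [/eqP-> /trun_phaseT]]]]].
  case=> u1 [v1 [u2 [v2 [H1 H2 Eu ->]]]].
  by exists u1, v1, u2, v2; split=> //; rewrite -Eu.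
- case=> u1 [v1 [u2 [v2 [H1 H2 Lu ->]]]].
  exists (u1 ++ s.1 ++ u2), false, true; split=> //; split=> //; split=> //.
  apply: trun_cat (rel_star_trun _ H1) (trun_cat (trun1 _) (rel_star_trun _ H2)).
  - by move=> u0 v0 P0; rewrite mem_cat (map_f (fun p => (false, p.1, p.2, false)) P0).
  - by rewrite mem_cat in_cons eqxx orbT.
  - move=> u0 v0 P0; rewrite mem_cat in_cons.
    by rewrite (map_f (fun p => (true, p.1, p.2, true)) P0) !orbT.
Qed.

Definition relT P := phaseT P ([::], [::]) P.

Lemma transduce_relT P L v :
  transduce (relT P) L v <-> exists2 u, L u & rel_star P u v.
Proof.
rewrite transduce_phaseT; split.
- by case=> u1 [v1 [u2 [v2 [H1 H2 Lu ->]]]]; exists (u1 ++ u2); last exact: rel_star_cat.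
- case=> u Lu Huv; exists u, v, [::], [::].
  by rewrite /= !cats0; split=> //; exact: rel_star_nil.
Qed.

Definition map_pairs (f : A -> B) := [seq ([:: a], [:: f a]) | a <- enum A].
Definition comap_pairs (f : B -> A) := [seq ([:: f b], [:: b]) | b <- enum B].
Definition erase_pairs : seq (seq A * seq B) := [seq ([:: a], [::]) | a <- enum A].
Definition emit_pairs : seq (seq A * seq B) := [seq ([::], [:: b]) | b <- enum B].

Lemma rel_star_map_pairs f u v : rel_star (map_pairs f) u v <-> v = map f u.
Proof.
split=> [|->]; first by elim=> // _ _ u' v' /mapP [a _ [-> ->]] _ ->.
elim: u => [|a u IH]; first exact: rel_star_nil.
by apply: (rel_star_cons (u := [:: a]) (v := [:: f a])) IH; rewrite map_f ?mem_enum.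
Qed.

Lemma rel_star_comap_pairs f u v : rel_star (comap_pairs f) u v <-> u = map f v.
Proof.
split=> [|->]; first by elim=> // _ _ u' v' /mapP [b _ [-> ->]] _ ->.
elim: v => [|b v IH]; first exact: rel_star_nil.
by apply: (rel_star_cons (u := [:: f b]) (v := [:: b])) IH; rewrite map_f ?mem_enum.
Qed.

Lemma rel_star_erase_pairs u v : rel_star erase_pairs u v <-> v = [::].
Proof.
split=> [|->]; first by elim=> // _ _ u' v' /mapP [a _ [_ ->]] _ ->.
elim: u => [|a u IH]; first exact: rel_star_nil.
by apply: (rel_star_cons (u := [:: a]) (v := [::])) IH; rewrite map_f ?mem_enum.
Qed.

Lemma rel_star_erase_emit_pairs u v : rel_star (erase_pairs ++ emit_pairs) u v.
Proof.
elim: u => [|a u IH].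
- elim: v => [|b v IH]; first exact: rel_star_nil.
  apply: (rel_star_cons (u := [::]) (v := [:: b])) IH.
  by rewrite mem_cat [_ \in emit_pairs]map_f ?orbT ?mem_enum.
- apply: (rel_star_cons (u := [:: a]) (v := [::])) IH.
  by rewrite mem_cat map_f ?mem_enum.
Qed.

End PhaseTransducer.

Arguments erase_pairs {A B}.
Arguments emit_pairs {A B}.

Definition letter_inv (X : Type) (y : X + X) : X + X :=
  match y with inl x => inr x | inr x => inl x end.

Definition word_inv (X : Type) (w : seq (X + X)) := rev (map (@letter_inv X) w).

Section LoopAutomaton.

Variables (S : Type) (op : S -> S -> S) (X : Type) (g : X -> S).
Local Notation reach := (loop_reach op g).

Lemma loop_reach_cat a u v b :
  reach a (u ++ v) b <-> exists c, reach a u c /\ reach c v b.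
Proof.
elim: u a => [|[x|x] u IH] a /=.
- by split=> [Hab|[c [-> //]]]; exists a.
- exact: IH.
- split.
  + by case=> c [Hc /IH [d [Hcd Hdb]]]; exists d; split=> //; exists c.
  + by case=> d [[c [Hc Hcd]] Hdb]; exists c; split=> //; apply/IH; exists d.
Qed.

Lemma loop_reach_inv a w b : reach a w b -> reach b (word_inv w) a.
Proof.
rewrite /word_inv; elim: w a => [|[x|x] w IH] a /=; first by move->.
- move/IH; rewrite rev_cons -cats1 => Hw.
  by apply/loop_reach_cat; exists (mul1 op a (g x)); split=> //; exists a.
- case=> c [<- /IH Hw]; rewrite rev_cons -cats1.
  by apply/loop_reach_cat; exists c.
Qed.

Lemma loop_reach_eval_word x w :
  reach None (map inl (x :: w)) (Some (eval_word op g x w)).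
Proof.
rewrite /eval_word /=; elim: w (g x) => [|y w IH] s //=; exact: IH.
Qed.

Hypothesis gen : generates op g.

Lemma loop_reach_from_one c : exists u, reach None u c.
Proof.
case: c => [s|]; last by exists [::].
by have [x [w <-]] := gen s; exists (map inl (x :: w)); exact: loop_reach_eval_word.
Qed.

Lemma loop_reach_to_one c : exists u, reach c u None.
Proof. by have [u /loop_reach_inv] := loop_reach_from_one c; exists (word_inv u). Qed.

Lemma loop_reach_prefix u :
  (exists b, reach None u b) <-> exists u', reach None (u ++ u') None.
Proof.
split=> [[b Hu]|[u' /loop_reach_cat [b [Hu _]]]]; last by exists b.
by have [u' Hu'] := loop_reach_to_one b; exists u'; apply/loop_reach_cat; exists b.
Qed.

Lemma loop_reach_suffix v :
  (exists c, reach c v None) <-> exists u', reach None (u' ++ v) None.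
Proof.
split=> [[c Hv]|[u' /loop_reach_cat [c [_ Hv]]]]; last by exists c.
by have [u' Hu'] := loop_reach_from_one c; exists u'; apply/loop_reach_cat; exists c.
Qed.

End LoopAutomaton.

Definition hat_some (X : Type) (y : X + X) : option X + option X :=
  match y with inl x => inl (Some x) | inr x => inr (Some x) end.

Lemma hat_some_inj (X : Type) : injective (@hat_some X).
Proof. by case=> x [] y //= [->]. Qed.

Section LoopAutomatonOp0.

Variables (S : Type) (op : S -> S -> S) (X : Type) (g : X -> S).
Local Notation reach := (loop_reach op g).
Local Notation reach0 := (loop_reach (op0 op) (gen0 g)).
Local Notation lift := (omap (@Some S)).
Local Notation zero := (Some None : option (option S)).
Local Notation z := (inl None : option X + option X).
Local Notation zbar := (inr None : option X + option X).

Lemma mul1_lift c s : mul1 (op0 op) (lift c) (Some s) = lift (mul1 op c s).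
Proof. by case: c. Qed.

Lemma mul1_zero c : mul1 (op0 op) c None = zero.
Proof. by case: c => [[]|]. Qed.

Lemma reach0_lift a w b : reach a w b -> reach0 (lift a) (map (@hat_some X) w) (lift b).
Proof.
elim: w a => [|[x|x] w IH] a /=; first by move->.
- by rewrite mul1_lift; exact: IH.
- by case=> c [<- /IH Hw]; exists (lift c); rewrite mul1_lift.
Qed.

Lemma reach0_zero m : reach0 zero m zero.
Proof. by elim: m => [|[y|y] m IH] //=; exists zero. Qed.

Lemma reach0_letter_from_lift c y e : reach0 (lift c) [:: y] e ->
  (y = z /\ e = zero) \/ exists y' d, [/\ y = hat_some y', e = lift d & reach c [:: y'] d].
Proof.
case: y => [[x|]|[x|]] /=.
- by move=> <-; right; exists (inl x), (mul1 op c (g x)); rewrite mul1_lift.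
- by rewrite mul1_zero => <-; left.
- case=> [[[t|]|] [Hc <-]]; case: c Hc => [c|] //= [<-]; right.
  + by exists (inr x), (Some t); split=> //; exists (Some t).
  + by exists (inr x), None; split=> //; exists None.
- by case=> c0 []; rewrite mul1_zero; case: c.
Qed.

Lemma reach0_letter_to_lift e y c : reach0 e [:: y] (lift c) ->
  (e = zero /\ y = zbar) \/ exists y' d, [/\ y = hat_some y', e = lift d & reach d [:: y'] c].
Proof.
case: y => [[x|]|[x|]] /=.
- case: e c => [[t|]|] [c|] //= [<-]; right; exists (inl x).
  + by exists (Some t).
  + by exists None.
- by rewrite mul1_zero; case: c.
- case=> _ [<- ->]; right; exists (inr x), (mul1 op c (g x)).
  by rewrite mul1_lift; split=> //; exists c.
- by case=> _ [<- ->]; left; rewrite mul1_zero.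
Qed.

Lemma reach0_lift_inv c v b : reach0 (lift c) v (lift b) ->
  (exists w, v = map (@hat_some X) w /\ reach c w b) \/
  (exists u d v2, [/\ v = map (@hat_some X) u ++ z :: v2, reach c u d
                     & reach0 zero v2 (lift b)]).
Proof.
elim: v c => [|y v IH] c.
  by move=> /= /(inj_omap Some_inj) ->; left; exists [::].
rewrite -cat1s => /loop_reach_cat [e [/reach0_letter_from_lift Hy Hv]].
case: Hy => [[-> E]|[y' [d [-> E Hy]]]]; subst e.
  by right; exists [::], c, v.
case: (IH d Hv) => [[w [-> Hw]]|[u [d' [v2 [-> Hu Hv2]]]]].
  by left; exists (y' :: w); split=> //; apply/(loop_reach_cat _ _ _ [:: y']); exists d.
right; exists (y' :: u), d', v2; split=> //.
by apply/(loop_reach_cat _ _ _ [:: y']); exists d.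
Qed.

Lemma reach0_zero_inv v c : reach0 zero v (lift c) ->
  exists m v' d, v = m ++ zbar :: map (@hat_some X) v' /\ reach d v' c.
Proof.
elim/last_ind: v c => [|v y IH] c; first by case: c.
rewrite -cats1 => /loop_reach_cat [e [Hv /reach0_letter_to_lift Hy]].
case: Hy => [[E ->]|[y' [d [-> E Hy]]]]; subst e.
  by exists v, [::], c.
have [m [v' [d' [-> Hv']]]] := IH d Hv.
exists m, (rcons v' y'), d'; split; first by rewrite map_rcons -cats1 -catA.
by rewrite -cats1; apply/loop_reach_cat; exists d.
Qed.

Lemma reach0_loop v : reach0 None v None <->
  (exists w, v = map (@hat_some X) w /\ reach None w None) \/
  (exists u b m v' c, [/\ v = map (@hat_some X) u ++ z :: m ++ zbar :: map (@hat_some X) v',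
                         reach None u b & reach c v' None]).
Proof.
split.
- case/(reach0_lift_inv (c := None) (b := None)) => [|[u [b [v2 [-> Hu]]]]]; first by left.
  by case/(reach0_zero_inv (c := None)) => m [v' [c [-> Hv]]]; right; exists u, b, m, v', c.
- case=> [[w [-> /reach0_lift //]]|[u [b [m [v' [c [-> /reach0_lift Hu /reach0_lift Hv]]]]]]].
  apply/loop_reach_cat; exists (lift b); split=> //=.
  rewrite mul1_zero; apply/loop_reach_cat; exists zero; split; first exact: reach0_zero.
  by exists (lift c); rewrite mul1_zero.
Qed.

Lemma reach0_lift_loop w : reach0 None (map (@hat_some X) w) None <-> reach None w None.
Proof.
split; last exact: (reach0_lift (a := None) (b := None)).
case/reach0_loop => [[w' [/(inj_map (@hat_some_inj X)) -> //]]|[u [_ [m [v' [_ [E _ _]]]]]]].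
exfalso; elim: u w E => [|y u IH] [|y' w] //=; first by case: y'.
by case=> _ /IH.
Qed.

End LoopAutomatonOp0.

Section LoopProblemOp0.

Variables (S : Type) (op : S -> S -> S) (X : finType) (g : X -> S).
Local Notation L := (loop_problem op g).
Local Notation L0 := (loop_problem (op0 op) (gen0 g)).
Local Notation z := (inl None : option X + option X).
Local Notation zbar := (inr None : option X + option X).

Definition hatT := relT (map_pairs (@hat_some X)).

Definition unhatT := relT (comap_pairs (@hat_some X)).

Definition zero_entryT := phaseT (map_pairs (@hat_some X)) ([::], [:: z])
  (erase_pairs ++ emit_pairs).

Definition zero_exitT := phaseT erase_pairs ([::], [:: zbar])
  (map_pairs (@hat_some X)).

Lemma loop_problem_unhatT : L = transduce unhatT L0.
Proof.
apply: language_ext => w; rewrite transduce_relT; split.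
- move=> Lw; exists (map (@hat_some X) w); first exact/reach0_lift_loop.
  exact/rel_star_comap_pairs.
- by case=> v L0v /rel_star_comap_pairs Ev; move: L0v; rewrite Ev => /reach0_lift_loop.
Qed.

Lemma loop_problem_op0 : generates op g ->
  L0 = lang_union (transduce hatT L)
         (lang_prod (transduce zero_entryT L) (transduce zero_exitT L)).
Proof.
move=> gen; apply: language_ext => v; split.
- case/reach0_loop => [[w [-> Lw]]|[u [b [m [v' [c [-> Hu Hv]]]]]]].
    by left; apply/transduce_relT; exists w => //; exact/rel_star_map_pairs.
  right; exists (map (@hat_some X) u ++ [:: z] ++ m), (zbar :: map (@hat_some X) v').
  split; first by rewrite -catA.
  split; apply/transduce_phaseT.
  + have [u' Lu] := (loop_reach_prefix gen u).1 (ex_intro _ b Hu).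
    exists u, (map (@hat_some X) u), u', m; split=> //; first exact/rel_star_map_pairs.
    exact: rel_star_erase_emit_pairs.
  + have [u' Lv] := (loop_reach_suffix gen v').1 (ex_intro _ c Hv).
    exists u', [::], v', (map (@hat_some X) v'); split=> //; first exact/rel_star_erase_pairs.
    exact/rel_star_map_pairs.
- case=> [/transduce_relT [w Lw /rel_star_map_pairs ->]|[p [q [-> [Hp Hq]]]]].
    by apply/reach0_loop; left; exists w.
  move/transduce_phaseT: Hp => [u [_ [u' [m [/rel_star_map_pairs -> _ Lu ->]]]]].
  move/transduce_phaseT: Hq => [v0 [_ [v' [_ [/rel_star_erase_pairs ->
    /rel_star_map_pairs -> Lv ->]]]]].
  have [b Hu] := (loop_reach_prefix gen u).2 (ex_intro _ u' Lu).
  have [c Hv] := (loop_reach_suffix gen v').2 (ex_intro _ v0 Lv).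
  by apply/reach0_loop; right; exists u, b, m, v', c; rewrite -catA.
Qed.

End LoopProblemOp0.

Theorem theorem3p4 (F : lang_family)
  (hU : closed_union F) (hP : closed_prod F) (hS : closed_star F)
  (hT : closed_transduction F)
  (S : Type) (op : S -> S -> S) (hassoc : associative_op op)
  (X : finType) (sigma : X -> S) (hgen : generates op sigma) :
  F (X + X)%type (loop_problem op sigma) <->
  F (option X + option X)%type (loop_problem (op0 op) (gen0 sigma)).
Proof.
split=> HF.
- rewrite (loop_problem_op0 hgen).
  by apply: hU; last apply: hP; apply: hT.
- by rewrite loop_problem_unhatT; apply: hT.
Qed.
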